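(* In the setting below, let $\phi_1:=\phi/\|\phi\|$ with $\|\phi\|=\sqrt{|\gamma(\phi,\phi)|}$ be the unitary section of $\mathcal U^M$ obtained from $\phi$. Then the connection one-form $i_\epsilon\sum A_idz^i+i_\epsilon\sum A_{\bar i}d\bar z^i$ of the pull back connection on $\mathcal U^M$ with respect to $\phi_1$ (i.e. $\mathcal D_i\phi_1=i_\epsilon A_i\phi_1$, $\mathcal D_{\bar i}\phi_1=i_\epsilon A_{\bar i}\phi_1$) is given by $$A_i=\tfrac12A^h_i,\qquad A_{\bar i}=\tfrac12\overline{A^h_i},$$ where $i_\epsilon A^h_i=\gamma(\partial_i\phi,\phi)/\gamma(\phi,\phi)$.
   Context: Let $\epsilon\in\{-1,1\}$, $\mathbb{C}_\epsilon=\mathbb{R}[i_\epsilon]$, $i_\epsilon^2=\epsilon$, conjugation $\overline{a+i_\epsilon b}=a-i_\epsilon b$. $V=\mathbb{C}_\epsilon^{2n+2}$ with coordinates $(z^i,w_i)$, $\Omega=\sum dz^i\wedge dw_i$, $\gamma=i_\epsilon\Omega(\cdot,\bar\cdot)$ ($\epsilon$-Hermitian); $V'=\{\gamma(v,v)\neq0\}$; $P(V')$ the set of lines $\mathbb{C}_\epsilon v$, $v\in V'$; $\pi_V:V'\to P(V')$; $\mathcal U\subset P(V')\times V$ the universal line bundle with Chern connection $\mathcal D_Xv=$ $\gamma$-orthogonal projection onto $\mathcal U$ of $d_Xv$. Setting: $(M,J,g,\nabla,\xi)$ is a regular conical affine special $\epsilon$-K\''ahler manifold of real dimension $2n+2$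 (an $\epsilon$-K\''ahler manifold with parallel $g$-skew $J$, $J^2=\epsilon\mathrm{Id}$, flat torsion-free $\nabla$ with $\nabla\omega=0$ for $\omega=\epsilon g(J\cdot,\cdot)$ and $(\nabla_XJ)Y=(\nabla_YJ)X$, and a vector field $\xi$ with $\nabla\xi=D\xi=\mathrm{Id}$ for the Levi-Civita connection $D$; regular: $g(\xi,\xi)$ nowhere zero and the leaf space of $\mathrm{span}\{\xi,J\xi\}$ is a Hausdorff $\epsilon$-complex manifold onto which the quotient is a holomorphic submersion). $\phi:M\to V'$ is a conical $\epsilon$-K\''ahlerian Lagrangian holomorphic immersion inducing the special geometry (i.e. $\phi^*\gamma$ nondegenerate, $\phi^*\Omega=0$, position vector field of $V$ tangent along $\phi$, $g=\phi^*\mathrm{Re}\gamma$), regarded as a holomorphic section of $\mathcal U^M=(\pi_V\circ\phi)^*\mathcal U$ with the pull back connection $\mathcal D$ (defined by $(f^*\mathcal D)_Xf^*s=\mathcal D_{dfX}s$). $(z^i)$ are conical special holomorphic coordinates $z^i\circ\phi$, $\partial_i=\partial/\partial z^i$, $\partial_{\bar i}=\partial/\partial\bar z^i$, $\mathcal D_i=\mathcal D_{\partial_i}$, $\mathcal D_{\bar i}=\mathcal D_{\partial_{\bar i}}$. *)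

(* Local (chart) model of the setting:
   the epsilon-complex numbers C_eps = R[i_eps], i_eps^2 = eps, are pairs of reals;
   V = C_eps^(2n+2) is  nat -> Ce  (indices 0..n are z^0..z^n, n+1..2n+1 are w_0..w_n);
   a point of M is given by its conical special holomorphic coordinates
   (z^0..z^n) : nat -> Ce  (only indices 0..n are used). *)
From Stdlib Require Import Reals.
From Coquelicot Require Import Coquelicot.
Open Scope R_scope.

Record Ce := mkCe { re : R ; im : R }.

Definition czero : Ce := mkCe 0 0.
Definition cre (r : R) : Ce := mkCe r 0.
Definition ie : Ce := mkCe 0 1.
Definition cadd (u v : Ce) : Ce := mkCe (re u + re v) (im u + im v).
Definition copp (u : Ce) : Ce := mkCe (- re u) (- im u).
Definition cmul (eps : R) (u v : Ce) : Ce :=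
  mkCe (re u * re v + eps * (im u * im v)) (re u * im v + im u * re v).
Definition cconj (u : Ce) : Ce := mkCe (re u) (- im u).
Definition cinv (eps : R) (u : Ce) : Ce :=
  let d := re u * re u - eps * (im u * im u) in mkCe (re u / d) (- im u / d).
Fixpoint csum (m : nat) (f : nat -> Ce) : Ce :=
  match m with O => czero | S m' => cadd (csum m' f) (f m') end.

Definition Vec := nat -> Ce.
Definition vadd (v u : Vec) : Vec := fun k => cadd (v k) (u k).
Definition vscal (eps : R) (c : Ce) (v : Vec) : Vec := fun k => cmul eps c (v k).

(** Omega = sum_i dz^i /\ dw_i *)
Definition Omega (eps : R) (n : nat) (v u : Vec) : Ce :=
  csum (S n) (fun i => cadd (cmul eps (v i) (u (S n + i)%nat))
                            (copp (cmul eps (v (S n + i)%nat) (u i)))).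
Definition gamma (eps : R) (n : nat) (v u : Vec) : Ce :=
  cmul eps ie (Omega eps n v (fun k => cconj (u k))).

Definition Pt := nat -> Ce.
Definition shift (p : Pt) (j : nat) (c : Ce) : Pt :=
  fun k => if Nat.eqb k j then cadd (p k) c else p k.

Definition open_chart (n : nat) (U : Pt -> Prop) : Prop :=
  forall p, U p -> exists d, 0 < d /\
    forall q, (forall j, (j <= n)%nat ->
                 Rabs (re (q j) - re (p j)) < d /\ Rabs (im (q j) - im (p j)) < d) ->
              U q.

Definition dxR (F : Pt -> R) (j : nat) (p : Pt) : R :=
  Derive (fun t => F (shift p j (cre t))) 0.
Definition dyR (F : Pt -> R) (j : nat) (p : Pt) : R :=
  Derive (fun t => F (shift p j (mkCe 0 t))) 0.
Definition dx (F : Pt -> Ce) (j : nat) (p : Pt) : Ce :=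
  mkCe (dxR (fun q => re (F q)) j p) (dxR (fun q => im (F q)) j p).
Definition dy (F : Pt -> Ce) (j : nat) (p : Pt) : Ce :=
  mkCe (dyR (fun q => re (F q)) j p) (dyR (fun q => im (F q)) j p).

(** partial_j = 1/2 (d/dx^j + eps i_eps d/dy^j),
    partial_{bar j} = 1/2 (d/dx^j - eps i_eps d/dy^j)
    (so that partial_j z^j = 1, partial_j bar z^j = 0, etc.) *)
Definition wirt (eps : R) (F : Pt -> Ce) (j : nat) (p : Pt) : Ce :=
  cmul eps (cre (1/2)) (cadd (dx F j p) (cmul eps (cmul eps (cre eps) ie) (dy F j p))).
Definition wirtbar (eps : R) (F : Pt -> Ce) (j : nat) (p : Pt) : Ce :=
  cmul eps (cre (1/2)) (cadd (dx F j p) (copp (cmul eps (cmul eps (cre eps) ie) (dy F j p)))).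

Definition vdx (s : Pt -> Vec) (j : nat) (p : Pt) : Vec := fun k => dx (fun q => s q k) j p.
Definition vdy (s : Pt -> Vec) (j : nat) (p : Pt) : Vec := fun k => dy (fun q => s q k) j p.
Definition vwirt (eps : R) (s : Pt -> Vec) (j : nat) (p : Pt) : Vec :=
  fun k => wirt eps (fun q => s q k) j p.
Definition vwirtbar (eps : R) (s : Pt -> Vec) (j : nat) (p : Pt) : Vec :=
  fun k => wirtbar eps (fun q => s q k) j p.

Definition proj (eps : R) (n : nat) (l v : Vec) : Vec :=
  vscal eps (cmul eps (gamma eps n v l) (cinv eps (gamma eps n l l))) l.

(** pull back connection on U^M along phi, applied to a section s of U^M
    (s p in the line C_eps (phi p)):  D_X s = gamma-orthogonal projection onto
    C_eps (phi p) of d_X s, extended C_eps-linearly to partial_j, partial_{bar j}. *)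
Definition Dhol (eps : R) (n : nat) (phi s : Pt -> Vec) (j : nat) (p : Pt) : Vec :=
  proj eps n (phi p) (vwirt eps s j p).
Definition Dbar (eps : R) (n : nat) (phi s : Pt -> Vec) (j : nat) (p : Pt) : Vec :=
  proj eps n (phi p) (vwirtbar eps s j p).

(** ||v|| = sqrt |gamma(v,v)|  (gamma(v,v) is real) *)
Definition normV (eps : R) (n : nat) (v : Vec) : R := sqrt (Rabs (re (gamma eps n v v))).
Definition unitary (eps : R) (n : nat) (phi : Pt -> Vec) (p : Pt) : Vec :=
  vscal eps (cre (/ normV eps n (phi p))) (phi p).

(** d phi (X) for the real tangent vector X = sum_j a_j d/dx^j + b_j d/dy^j *)
Definition dphi (eps : R) (n : nat) (phi : Pt -> Vec) (p : Pt) (a b : nat -> R) : Vec :=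
  fun k => csum (S n) (fun j => cadd (cmul eps (cre (a j)) (vdx phi j p k))
                                     (cmul eps (cre (b j)) (vdy phi j p k))).

Definition conical_Lagrangian_holomorphic_immersion
  (eps : R) (n : nat) (U : Pt -> Prop) (phi : Pt -> Vec) : Prop :=
  (forall p, U p -> forall j k, (j <= n)%nat ->
     ex_derive (fun t => re (phi (shift p j (cre t)) k)) 0 /\
     ex_derive (fun t => im (phi (shift p j (cre t)) k)) 0 /\
     ex_derive (fun t => re (phi (shift p j (mkCe 0 t)) k)) 0 /\
     ex_derive (fun t => im (phi (shift p j (mkCe 0 t)) k)) 0) /\
  (forall p, U p -> forall j k, (j <= n)%nat -> vwirtbar eps phi j p k = czero) /\
  (forall p, U p -> gamma eps n (phi p) (phi p) <> czero) /\
  (forall p, U p -> forall i, (i <= n)%nat -> phi p i = p i) /\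
  (forall p, U p -> forall a b a' b',
     Omega eps n (dphi eps n phi p a b) (dphi eps n phi p a' b') = czero) /\
  (forall p, U p -> forall a b,
     (forall a' b', gamma eps n (dphi eps n phi p a b) (dphi eps n phi p a' b') = czero) ->
     forall j, (j <= n)%nat -> a j = 0 /\ b j = 0) /\
  (* conical: position vector field tangent along phi *)
  (forall p, U p -> exists a b, phi p = dphi eps n phi p a b).

From Stdlib Require Import Reals Lra FunctionalExtensionality.
From Coquelicot Require Import Coquelicot.
Open Scope R_scope.

(* Write phi_1 = c phi with the real factor c = |G|^(-1/2), G = gamma(phi, phi).  Since gamma is
   real on the diagonal, c is real, so the Leibniz rule gives d_i phi_1 = (d_i c) phi + c d_i phi
   with d_i c = -(1/2) c (d_i G) / G.  Sesquilinearity of gamma and holomorphy of phi give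
   d_i G = gamma(d_i phi, phi) = i A^h_i G and d_{bar i} G = conj(d_i G).  Projecting onto the line
   of phi therefore yields D_i phi_1 = (-1/2 + 1) i A^h_i phi_1, and, as d_{bar i} phi = 0,
   D_{bar i} phi_1 = -(1/2) conj(i A^h_i) phi_1 = (1/2) i conj(A^h_i) phi_1. *)

Lemma Ce_ext (x y : Ce) : re x = re y -> im x = im y -> x = y.
Proof. destruct x, y; simpl; intros; subst; reflexivity. Qed.

Ltac ce_ring := apply Ce_ext; cbn [re im cmul cadd copp cconj cre ie czero]; ring.
(* [ring] treats [/ 2] as an atom, so identities such as [- 1/2 + 1 = 1/2] need [field];
   other inverses are generalized away first, leaving [2 <> 0] as the only side condition. *)
Ltac ce_field := apply Ce_ext; cbn [re im cmul cadd copp cconj cre ie czero]; field.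

Lemma vscal_vscal eps a b v : vscal eps a (vscal eps b v) = vscal eps (cmul eps a b) v.
Proof. apply functional_extensionality; intros k; unfold vscal; ce_ring. Qed.

Lemma cinv_real eps u : im u = 0 -> re u <> 0 -> cinv eps u = cre (/ re u).
Proof.
  destruct u as [a b]; cbn; intros -> Ha; apply Ce_ext; cbn; field; auto.
Qed.

Lemma csum_ext m f g : (forall i, f i = g i) -> csum m f = csum m g.
Proof. intros H; induction m; simpl; auto. rewrite IHm, H; auto. Qed.
Lemma csum_add m f g : csum m (fun i => cadd (f i) (g i)) = cadd (csum m f) (csum m g).
Proof. induction m; simpl. ce_ring. rewrite IHm. ce_ring. Qed.
Lemma csum_scal eps m a f : csum m (fun i => cmul eps a (f i)) = cmul eps a (csum m f).
Proof. induction m; simpl. ce_ring. rewrite IHm. ce_ring. Qed.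
Lemma csum_conj m f : csum m (fun i => cconj (f i)) = cconj (csum m f).
Proof. induction m; simpl. ce_ring. rewrite IHm. ce_ring. Qed.

Section Gamma.
Variables (eps : R) (n : nat).

Lemma gamma_sum v u : gamma eps n v u = csum (S n) (fun i => cmul eps ie
  (cadd (cmul eps (v i) (cconj (u (S n + i)%nat)))
        (copp (cmul eps (v (S n + i)%nat) (cconj (u i)))))).
Proof. unfold gamma, Omega. rewrite csum_scal. reflexivity. Qed.

Lemma gamma_conj_sym v u : gamma eps n v u = cconj (gamma eps n u v).
Proof. rewrite !gamma_sum, <- csum_conj. apply csum_ext; intros; ce_ring. Qed.

Lemma gamma_addl v v' u :
  gamma eps n (vadd v v') u = cadd (gamma eps n v u) (gamma eps n v' u).
Proof. rewrite !gamma_sum, <- csum_add. apply csum_ext; intros; unfold vadd; ce_ring. Qed.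

Lemma gamma_addr v u u' :
  gamma eps n v (vadd u u') = cadd (gamma eps n v u) (gamma eps n v u').
Proof. rewrite !gamma_sum, <- csum_add. apply csum_ext; intros; unfold vadd; ce_ring. Qed.

Lemma gamma_scall a v u : gamma eps n (vscal eps a v) u = cmul eps a (gamma eps n v u).
Proof. rewrite !gamma_sum, <- csum_scal. apply csum_ext; intros; unfold vscal; ce_ring. Qed.

Lemma gamma_scalr a v u :
  gamma eps n v (vscal eps a u) = cmul eps (cconj a) (gamma eps n v u).
Proof. rewrite !gamma_sum, <- csum_scal. apply csum_ext; intros; unfold vscal; ce_ring. Qed.

Lemma gamma0l u : gamma eps n (fun _ => czero) u = czero.
Proof.
  rewrite gamma_sum. transitivity (csum (S n) (fun _ => cmul eps czero czero)).
  - apply csum_ext; intros; ce_ring.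
  - rewrite csum_scal. ce_ring.
Qed.

Lemma gamma0r v : gamma eps n v (fun _ => czero) = czero.
Proof. rewrite gamma_conj_sym, gamma0l. ce_ring. Qed.

Lemma im_gamma_diag v : im (gamma eps n v v) = 0.
Proof. pose proof (f_equal im (gamma_conj_sym v v)) as H. cbn [im cconj] in H. lra. Qed.

Lemma re_gamma_diag_neq0 v : gamma eps n v v <> czero -> re (gamma eps n v v) <> 0.
Proof.
  intros HG E. apply HG, Ce_ext; [exact E | apply im_gamma_diag].
Qed.

Lemma cinv_gamma_diag v :
  gamma eps n v v <> czero -> cinv eps (gamma eps n v v) = cre (/ re (gamma eps n v v)).
Proof. intros HG; apply cinv_real; [apply im_gamma_diag | apply re_gamma_diag_neq0, HG]. Qed.

Lemma proj_scal_add l a b w : gamma eps n l l <> czero ->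
  proj eps n l (vadd (vscal eps a l) (vscal eps b w)) =
  vscal eps (cadd a (cmul eps b (cmul eps (gamma eps n w l) (cinv eps (gamma eps n l l))))) l.
Proof.
  intros HG. unfold proj.
  rewrite gamma_addl, !gamma_scall, (cinv_gamma_diag l HG).
  f_equal; apply Ce_ext; cbn [re im cmul cadd cre]; rewrite (im_gamma_diag l);
    field; exact (re_gamma_diag_neq0 l HG).
Qed.

End Gamma.

Definition has_cderive (F : R -> Ce) (D : Ce) : Prop :=
  is_derive (fun t => re (F t)) 0 (re D) /\ is_derive (fun t => im (F t)) 0 (im D).

Lemma is_derive_eq (f : R -> R) (x a b : R) : is_derive f x a -> a = b -> is_derive f x b.
Proof. intros; subst; auto. Qed.

Lemma has_cderive_eq F D D' : has_cderive F D -> D = D' -> has_cderive F D'.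
Proof. intros; subst; auto. Qed.

Lemma has_cderive_const c : has_cderive (fun _ => c) czero.
Proof. split; exact (is_derive_const _ 0). Qed.

Lemma has_cderive_add F G a b : has_cderive F a -> has_cderive G b ->
  has_cderive (fun t => cadd (F t) (G t)) (cadd a b).
Proof.
  intros [Fr Fi] [Gr Gi].
  split; [exact (is_derive_plus _ _ 0 _ _ Fr Gr) | exact (is_derive_plus _ _ 0 _ _ Fi Gi)].
Qed.

Lemma has_cderive_opp F a : has_cderive F a -> has_cderive (fun t => copp (F t)) (copp a).
Proof.
  intros [Fr Fi]; split; [exact (is_derive_opp _ 0 _ Fr) | exact (is_derive_opp _ 0 _ Fi)].
Qed.

Lemma has_cderive_conj F a : has_cderive F a -> has_cderive (fun t => cconj (F t)) (cconj a).
Proof. intros [Fr Fi]; split; [exact Fr | exact (is_derive_opp _ 0 _ Fi)]. Qed.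

Lemma has_cderive_mul eps F G a b : has_cderive F a -> has_cderive G b ->
  has_cderive (fun t => cmul eps (F t) (G t)) (cadd (cmul eps a (G 0)) (cmul eps (F 0) b)).
Proof.
  intros [Fr Fi] [Gr Gi].
  assert (Hmul : forall f g df dg, is_derive f 0 df -> is_derive g 0 dg ->
            is_derive (fun t => f t * g t) 0 (df * g 0 + f 0 * dg)).
  { intros f g df dg Hf Hg. exact (is_derive_mult f g 0 df dg Hf Hg Rmult_comm). }
  split; cbn [re im cmul cadd].
  - eapply is_derive_eq.
    + exact (is_derive_plus _ _ 0 _ _ (Hmul _ _ _ _ Fr Gr)
               (is_derive_scal _ 0 eps _ (Hmul _ _ _ _ Fi Gi))).
    + cbn. ring.
  - eapply is_derive_eq.
    + exact (is_derive_plus _ _ 0 _ _ (Hmul _ _ _ _ Fr Gi) (Hmul _ _ _ _ Fi Gr)).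
    + cbn. ring.
Qed.

Lemma has_cderive_csum m (F : R -> nat -> Ce) D :
  (forall i, has_cderive (fun t => F t i) (D i)) ->
  has_cderive (fun t => csum m (F t)) (csum m D).
Proof.
  intros H; induction m; simpl; [apply has_cderive_const | apply has_cderive_add; auto].
Qed.

Lemma has_cderive_gamma eps n (v u : R -> Vec) v' u' :
  (forall k, has_cderive (fun t => v t k) (v' k)) ->
  (forall k, has_cderive (fun t => u t k) (u' k)) ->
  has_cderive (fun t => gamma eps n (v t) (u t))
              (cadd (gamma eps n v' (u 0)) (gamma eps n (v 0) u')).
Proof.
  intros Hv Hu.
  assert (Hmul := has_cderive_mul eps).
  assert (E : (fun t => gamma eps n (v t) (u t)) = fun t => csum (S n) (fun i => cmul eps ie
     (cadd (cmul eps (v t i) (cconj (u t (S n + i)%nat)))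
           (copp (cmul eps (v t (S n + i)%nat) (cconj (u t i))))))).
  { apply functional_extensionality; intros; apply gamma_sum. }
  rewrite E. eapply has_cderive_eq.
  - apply has_cderive_csum; intros i.
    apply Hmul; [apply has_cderive_const |].
    apply has_cderive_add; [| apply has_cderive_opp];
      apply Hmul; auto; apply has_cderive_conj; auto.
  - rewrite !gamma_sum, <- csum_add. apply csum_ext; intros; ce_ring.
Qed.

Lemma is_derive_inv_sqrt_abs (f : R -> R) x df : is_derive f x df -> f x <> 0 ->
  is_derive (fun t => / sqrt (Rabs (f t))) x (- (1/2) * / sqrt (Rabs (f x)) * df / f x).
Proof.
  intros Hd Hf.
  assert (Hpos : 0 < Rabs (f x)) by (apply Rabs_pos_lt; auto).
  assert (Hs : sqrt (Rabs (f x)) <> 0) by (apply Rgt_not_eq, sqrt_lt_R0; auto).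
  assert (Hsq := sqrt_sqrt (Rabs (f x)) (Rlt_le _ _ Hpos)).
  assert (Habs := is_derive_Rabs f x df Hd Hf).
  assert (Hsqrt := is_derive_sqrt _ x _ Habs Hpos).
  eapply is_derive_eq; [exact (is_derive_inv _ x _ Hsqrt Hs) |].
  cbv beta. replace (sqrt (Rabs (f x)) ^ 2) with (Rabs (f x)) by (simpl; lra).
  destruct (Rlt_dec 0 (f x)).
  - rewrite sign_eq_1, Rabs_right in * by lra. field; split; assumption.
  - rewrite sign_eq_m1, Rabs_left in * by lra. field; split; assumption.
Qed.

Definition has_partials (F : Pt -> Ce) (j : nat) (p : Pt) (Dx Dy : Ce) : Prop :=
  has_cderive (fun t => F (shift p j (cre t))) Dx /\
  has_cderive (fun t => F (shift p j (mkCe 0 t))) Dy.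

Lemma shift_zero p j : shift p j (mkCe 0 0) = p.
Proof.
  apply functional_extensionality; intros k; unfold shift.
  destruct (Nat.eqb k j); [ce_ring | reflexivity].
Qed.

(* Both coordinate lines pass through [p] at [t = 0]: [shift p j (cre 0)] is [p]. *)
Ltac at_base := cbv beta in *; try change (cre 0) with (mkCe 0 0) in *; rewrite ?shift_zero in *.

Lemma has_partials_dx_dy F j p :
  ex_derive (fun t => re (F (shift p j (cre t)))) 0 ->
  ex_derive (fun t => im (F (shift p j (cre t)))) 0 ->
  ex_derive (fun t => re (F (shift p j (mkCe 0 t)))) 0 ->
  ex_derive (fun t => im (F (shift p j (mkCe 0 t)))) 0 ->
  has_partials F j p (dx F j p) (dy F j p).
Proof. intros; split; split; apply Derive_correct; auto. Qed.

Lemma dx_dy_of_partials F j p Dx Dy :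
  has_partials F j p Dx Dy -> dx F j p = Dx /\ dy F j p = Dy.
Proof.
  intros [[Hxr Hxi] [Hyr Hyi]]; unfold dx, dy, dxR, dyR.
  split; apply Ce_ext; cbn [re im]; apply is_derive_unique; assumption.
Qed.

Lemma im_partials_of_real F j p Dx Dy : has_partials F j p Dx Dy ->
  (forall q, im (F q) = 0) -> im Dx = 0 /\ im Dy = 0.
Proof.
  intros [[_ Hx] [_ Hy]] Hreal.
  apply (is_derive_ext _ (fun _ => 0)) in Hx; [| intros; apply Hreal].
  apply (is_derive_ext _ (fun _ => 0)) in Hy; [| intros; apply Hreal].
  rewrite <- (is_derive_unique _ _ _ Hx), <- (is_derive_unique _ _ _ Hy), Derive_const.
  split; reflexivity.
Qed.

Section Leibniz.
Variables (eps : R) (j : nat) (p : Pt).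

Lemma has_partials_mul f g fx fy gx gy :
  has_partials f j p fx fy -> has_partials g j p gx gy ->
  has_partials (fun q => cmul eps (f q) (g q)) j p
    (cadd (cmul eps fx (g p)) (cmul eps (f p) gx))
    (cadd (cmul eps fy (g p)) (cmul eps (f p) gy)).
Proof.
  intros [Hfx Hfy] [Hgx Hgy].
  split; (eapply has_cderive_eq; [apply has_cderive_mul; eassumption | at_base; reflexivity]).
Qed.

Lemma wirt_mul f g fx fy gx gy :
  has_partials f j p fx fy -> has_partials g j p gx gy ->
  wirt eps (fun q => cmul eps (f q) (g q)) j p =
    cadd (cmul eps (wirt eps f j p) (g p)) (cmul eps (f p) (wirt eps g j p)) /\
  wirtbar eps (fun q => cmul eps (f q) (g q)) j p =
    cadd (cmul eps (wirtbar eps f j p) (g p)) (cmul eps (f p) (wirtbar eps g j p)).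
Proof.
  intros Hf Hg.
  destruct (dx_dy_of_partials _ _ _ _ _ (has_partials_mul _ _ _ _ _ _ Hf Hg)) as [Ex Ey].
  destruct (dx_dy_of_partials _ _ _ _ _ Hf) as [Efx Efy].
  destruct (dx_dy_of_partials _ _ _ _ _ Hg) as [Egx Egy].
  unfold wirt, wirtbar; rewrite Ex, Ey, Efx, Efy, Egx, Egy; split; ce_ring.
Qed.

Variable n : nat.

Lemma has_partials_gamma (s t : Pt -> Vec) sx sy tx ty :
  (forall k, has_partials (fun q => s q k) j p (sx k) (sy k)) ->
  (forall k, has_partials (fun q => t q k) j p (tx k) (ty k)) ->
  has_partials (fun q => gamma eps n (s q) (t q)) j p
    (cadd (gamma eps n sx (t p)) (gamma eps n (s p) tx))
    (cadd (gamma eps n sy (t p)) (gamma eps n (s p) ty)).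
Proof.
  intros Hs Ht.
  split; (eapply has_cderive_eq; [apply has_cderive_gamma | at_base; reflexivity]);
    intros k; [exact (proj1 (Hs k)) | exact (proj1 (Ht k))
              | exact (proj2 (Hs k)) | exact (proj2 (Ht k))].
Qed.

Lemma vwirt_of_partials (s : Pt -> Vec) sx sy :
  (forall k, has_partials (fun q => s q k) j p (sx k) (sy k)) ->
  vwirt eps s j p = vscal eps (cre (1/2)) (vadd sx (vscal eps (cmul eps (cre eps) ie) sy)) /\
  vwirtbar eps s j p =
    vscal eps (cre (1/2)) (vadd sx (vscal eps (copp (cmul eps (cre eps) ie)) sy)).
Proof.
  intros Hs; split; apply functional_extensionality; intros k;
    unfold vwirt, wirt, vwirtbar, wirtbar, vscal, vadd;
    destruct (dx_dy_of_partials _ _ _ _ _ (Hs k)) as [-> ->]; ce_ring.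
Qed.

Lemma wirt_gamma (s t : Pt -> Vec) sx sy tx ty :
  (forall k, has_partials (fun q => s q k) j p (sx k) (sy k)) ->
  (forall k, has_partials (fun q => t q k) j p (tx k) (ty k)) ->
  wirt eps (fun q => gamma eps n (s q) (t q)) j p =
    cadd (gamma eps n (vwirt eps s j p) (t p)) (gamma eps n (s p) (vwirtbar eps t j p)) /\
  wirtbar eps (fun q => gamma eps n (s q) (t q)) j p =
    cadd (gamma eps n (vwirtbar eps s j p) (t p)) (gamma eps n (s p) (vwirt eps t j p)).
Proof.
  intros Hs Ht.
  destruct (dx_dy_of_partials _ _ _ _ _ (has_partials_gamma _ _ _ _ _ _ Hs Ht)) as [Ex Ey].
  destruct (vwirt_of_partials _ _ _ Hs) as [Es Esbar].
  destruct (vwirt_of_partials _ _ _ Ht) as [Et Etbar].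
  unfold wirt, wirtbar; rewrite Ex, Ey, Es, Esbar, Et, Etbar.
  rewrite !gamma_scall, !gamma_scalr, !gamma_addl, !gamma_addr, !gamma_scall, !gamma_scalr.
  split; ce_ring.
Qed.

End Leibniz.

Lemma has_partials_inv_sqrt_abs (g : Pt -> Ce) j p Gx Gy :
  has_partials g j p Gx Gy -> re (g p) <> 0 ->
  has_partials (fun q => cre (/ sqrt (Rabs (re (g q))))) j p
    (cre (- (1/2) * / sqrt (Rabs (re (g p))) * re Gx / re (g p)))
    (cre (- (1/2) * / sqrt (Rabs (re (g p))) * re Gy / re (g p))).
Proof.
  intros [[Hx _] [Hy _]] Hre.
  split; split; cbn [re im cre]; try exact (is_derive_const _ 0).
  - pose proof (is_derive_inv_sqrt_abs _ 0 _ Hx) as H; at_base; exact (H Hre).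
  - pose proof (is_derive_inv_sqrt_abs _ 0 _ Hy) as H; at_base; exact (H Hre).
Qed.

Lemma wirt_inv_sqrt_abs eps (g : Pt -> Ce) j p Gx Gy :
  has_partials g j p Gx Gy -> (forall q, im (g q) = 0) -> re (g p) <> 0 ->
  wirt eps (fun q => cre (/ sqrt (Rabs (re (g q))))) j p =
    cmul eps (cre (- (1/2) * / sqrt (Rabs (re (g p))) / re (g p))) (wirt eps g j p) /\
  wirtbar eps (fun q => cre (/ sqrt (Rabs (re (g q))))) j p =
    cmul eps (cre (- (1/2) * / sqrt (Rabs (re (g p))) / re (g p))) (wirtbar eps g j p).
Proof.
  intros Hg Hreal Hre.
  destruct (im_partials_of_real _ _ _ _ _ Hg Hreal) as [Hx Hy].
  destruct (dx_dy_of_partials _ _ _ _ _ Hg) as [Egx Egy].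
  destruct (dx_dy_of_partials _ _ _ _ _ (has_partials_inv_sqrt_abs _ _ _ _ _ Hg Hre))
    as [Ex Ey].
  unfold wirt, wirtbar; rewrite Egx, Egy, Ex, Ey.
  split; apply Ce_ext; cbn [re im cmul cadd copp cre ie]; rewrite ?Hx, ?Hy; unfold Rdiv; ring.
Qed.

Section Unitary.
Variables (eps : R) (n : nat) (phi : Pt -> Vec) (j : nat) (p : Pt).
Hypothesis phi_partials :
  forall k, has_partials (fun q => phi q k) j p (vdx phi j p k) (vdy phi j p k).
Hypothesis phi_holomorphic : vwirtbar eps phi j p = fun _ => czero.
Hypothesis phi_nondegenerate : gamma eps n (phi p) (phi p) <> czero.

Local Notation G := (gamma eps n (phi p) (phi p)).
Local Notation Z := (gamma eps n (vwirt eps phi j p) (phi p)).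
Local Notation c := (/ sqrt (Rabs (re G))).

Let G_partials := has_partials_gamma eps j p n _ _ _ _ _ _ phi_partials phi_partials.
Let re_G_neq0 := re_gamma_diag_neq0 eps n _ phi_nondegenerate.
Let normalizer_partials := has_partials_inv_sqrt_abs _ _ _ _ _ G_partials re_G_neq0.
Let wirt_normalizer :=
  wirt_inv_sqrt_abs eps _ _ _ _ _ G_partials (fun q => im_gamma_diag eps n (phi q)) re_G_neq0.

Lemma vwirt_unitary : vwirt eps (unitary eps n phi) j p =
  vadd (vscal eps (cmul eps (cre (- (1/2) * c / re G)) Z) (phi p))
       (vscal eps (cre c) (vwirt eps phi j p)).
Proof.
  apply functional_extensionality; intros k.
  pose proof (proj1 (wirt_mul eps j p _ _ _ _ _ _ normalizer_partials (phi_partials k)))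
    as E.
  cbv beta in E; unfold vwirt at 1, unitary, vscal at 1, normV; rewrite E.
  rewrite (proj1 wirt_normalizer),
    (proj1 (wirt_gamma eps j p n _ _ _ _ _ _ phi_partials phi_partials)),
    phi_holomorphic, gamma0r.
  unfold vadd, vscal, vwirt; ce_ring.
Qed.

Lemma vwirtbar_unitary : vwirtbar eps (unitary eps n phi) j p =
  vadd (vscal eps (cmul eps (cre (- (1/2) * c / re G)) (cconj Z)) (phi p))
       (vscal eps (cre c) (vwirtbar eps phi j p)).
Proof.
  apply functional_extensionality; intros k.
  pose proof (proj2 (wirt_mul eps j p _ _ _ _ _ _ normalizer_partials (phi_partials k)))
    as E.
  cbv beta in E; unfold vwirtbar at 1, unitary, vscal at 1, normV; rewrite E.
  change (wirtbar eps (fun q => phi q k) j p) with (vwirtbar eps phi j p k).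
  rewrite (proj2 wirt_normalizer),
    (proj2 (wirt_gamma eps j p n _ _ _ _ _ _ phi_partials phi_partials)),
    phi_holomorphic, gamma0l, (gamma_conj_sym eps n (phi p) (vwirt eps phi j p)).
  unfold vadd, vscal, vwirtbar; ce_ring.
Qed.

Lemma Dhol_unitary : Dhol eps n phi (unitary eps n phi) j p =
  vscal eps (cmul eps (cre (1/2)) (cmul eps Z (cinv eps G))) (unitary eps n phi p).
Proof.
  unfold Dhol; rewrite vwirt_unitary, proj_scal_add by exact phi_nondegenerate.
  unfold unitary, normV; rewrite vscal_vscal, (cinv_gamma_diag eps n _ phi_nondegenerate).
  unfold Rdiv; generalize c (/ re G); intros inv_c inv_G.
  f_equal; ce_field.
Qed.

Lemma Dbar_unitary : Dbar eps n phi (unitary eps n phi) j p =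
  vscal eps (cmul eps (cre (- (1/2))) (cconj (cmul eps Z (cinv eps G)))) (unitary eps n phi p).
Proof.
  unfold Dbar; rewrite vwirtbar_unitary, proj_scal_add by exact phi_nondegenerate.
  unfold unitary, normV; rewrite phi_holomorphic, gamma0l, vscal_vscal,
    (cinv_gamma_diag eps n _ phi_nondegenerate).
  unfold Rdiv; generalize c (/ re G); intros inv_c inv_G.
  f_equal; ce_field.
Qed.

End Unitary.

Theorem mainTheorem9 (eps : R) (Heps : eps = 1 \/ eps = -1) (n : nat)
  (U : Pt -> Prop) (HU : open_chart n U) (phi : Pt -> Vec)
  (Hphi : conical_Lagrangian_holomorphic_immersion eps n U phi)
  (Ah : nat -> Pt -> Ce)
  (HAh : forall j p, (j <= n)%nat -> U p ->
     cmul eps ie (Ah j p) =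
     cmul eps (gamma eps n (vwirt eps phi j p) (phi p))
              (cinv eps (gamma eps n (phi p) (phi p)))) :
  forall j p, (j <= n)%nat -> U p ->
    Dhol eps n phi (unitary eps n phi) j p =
      vscal eps (cmul eps ie (cmul eps (cre (1/2)) (Ah j p))) (unitary eps n phi p) /\
    Dbar eps n phi (unitary eps n phi) j p =
      vscal eps (cmul eps ie (cmul eps (cre (1/2)) (cconj (Ah j p)))) (unitary eps n phi p).
Proof.
  (* The computation is valid for every real [eps]. *)
  intros j p Hj Hp.
  destruct Hphi as [Hdiff [Hholo [HG _]]].
  assert (Hpartials : forall k,
            has_partials (fun q => phi q k) j p (vdx phi j p k) (vdy phi j p k)).
  { intros k; destruct (Hdiff p Hp j k Hj) as [? [? [? ?]]]; apply has_partials_dx_dy; auto. }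
  assert (Hwbar : vwirtbar eps phi j p = fun _ => czero).
  { apply functional_extensionality; intros k; apply Hholo; auto. }
  rewrite (Dhol_unitary eps n phi j p Hpartials Hwbar (HG p Hp)),
          (Dbar_unitary eps n phi j p Hpartials Hwbar (HG p Hp)), <- (HAh j p Hj Hp).
  split; f_equal; ce_ring.
Qed.
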